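(* Let $X_j$, $j\in M$, be discrete random variables with $X_j\in\{0,\dots,r_j\}$, completely independent, with strictly positive joint probability vector $\pi=p(M)$. Let $t,h\subseteq M$ be disjoint, $j_h$ a vector of categories of the variables in $h$ all different from $0$, and $a\subseteq M$. Then: (a) the column space of $P_a G_{t,h}(j_h)$ is contained in the column space of $G_r$, where $r=a\cap(t\cup h)$; (b) if $t\subseteq a$ and $a\cap h=\emptyset$, then $P_aG_{t,h}(j_h)=G_t\,P(X_h=j_h)$.
   Context: Cells are in lexicographic order. $D_\pi=\mathrm{diag}(\pi)$. For $a\subseteq M$, $X_a=\bigotimes_{j\in M}X_j$ with $X_j$ the identity of order $r_j+1$ if $j\in a$ and $X_j=\mathbf 1_{r_j+1}$ otherwise, and $P_a=X_a(X_a'D_\pi X_a)^{-1}X_a'D_\pi$. For $r\subseteq M$, $G_r=\bigotimes_{j\in M}G_j$ with $G_j$ the identity of order $r_j+1$ without its first column if $j\in r$ and $G_j=\mathbf 1_{r_j+1}$ otherwise (so $G_\emptyset=\mathbf 1$). $G_{t,h}(j_h)=\bigotimes_{j\in M}B_j$ where $B_j$ is the identity of order $r_j+1$ without its first column if $j\in t$, the unit vector of length $r_j+1$ with a $1$ in the position of category $(j_h)_j$ if $j\in h$, and $\mathbf 1_{r_j+1}$ otherwise; i.e. the submatrix of $G_{t\cup h}$ with the variables in $h$ fixed to $j_h$. *)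

From HB Require Import structures.
From mathcomp Require Import all_boot all_order all_algebra.
Set Implicit Arguments. Unset Strict Implicit. Unset Printing Implicit Defensive.
Import Order.TTheory GRing.Theory Num.Theory.
Local Open Scope ring_scope.

(* Variables are indexed by M = 'I_m; variable j takes values 0..r j.
   A cell (x_0,...,x_{m-1}) is identified with its index in lexicographic
   order (variable 0 most significant), i.e. the mixed-radix number
   sum_j x_j * prod_{l>j} n_l.  [digit n j i] recovers the j-th coordinate
   of the index i for radices n. *)
Definition digit (m : nat) (n : 'I_m -> nat) (j : 'I_m) (i : nat) : nat :=
  (i %/ (\prod_(l < m | (j < l)%N) n l)%N) %% n j.

Definition kron (R : nzRingType) (m : nat) (nr nc : 'I_m -> nat)
    (B : 'I_m -> nat -> nat -> R) :
    'M[R]_((\prod_(j < m) nr j)%N, (\prod_(j < m) nc j)%N) :=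
  \matrix_(i, k) \prod_(j < m) B j (digit nr j i) (digit nc j k).

Definition ncat (m : nat) (r : 'I_m -> nat) (j : 'I_m) : nat := (r j).+1.

Definition Xcols (m : nat) (r : 'I_m -> nat) (a : {set 'I_m}) (j : 'I_m) : nat :=
  if j \in a then (r j).+1 else 1%N.
Definition Xmat (R : nzRingType) (m : nat) (r : 'I_m -> nat) (a : {set 'I_m}) :=
  kron (ncat r) (Xcols r a)
    (fun j x c => if j \in a then ((x == c)%:R : R) else 1).

(* G_t : identity without its first column for j in t, 1-vector otherwise *)
Definition Gcols (m : nat) (r : 'I_m -> nat) (t : {set 'I_m}) (j : 'I_m) : nat :=
  if j \in t then r j else 1%N.
Definition Gmat (R : nzRingType) (m : nat) (r : 'I_m -> nat) (t : {set 'I_m}) :=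
  kron (ncat r) (Gcols r t)
    (fun j x c => if j \in t then ((x == c.+1)%:R : R) else 1).

Definition Gthmat (R : nzRingType) (m : nat) (r : 'I_m -> nat)
    (t h : {set 'I_m}) (jh : 'I_m -> nat) :=
  kron (ncat r) (Gcols r t)
    (fun j x c => if j \in t then ((x == c.+1)%:R : R)
                  else if j \in h then ((x == jh j)%:R : R) else 1).

Definition Pmat (R : fieldType) (m : nat) (r : 'I_m -> nat)
    (pi : 'rV[R]_((\prod_(j < m) ncat r j)%N)) (a : {set 'I_m}) :=
  let X := Xmat R r a in
  let D := diag_mx pi in
  X *m invmx (X^T *m D *m X) *m X^T *m D.

Definition prob_h (R : nzRingType) (m : nat) (r : 'I_m -> nat)
    (pi : 'rV[R]_((\prod_(j < m) ncat r j)%N)) (h : {set 'I_m})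
    (jh : 'I_m -> nat) : R :=
  \sum_(i < (\prod_(j < m) ncat r j)%N
          | [forall j in h, digit (ncat r) j i == jh j]) pi 0 i.

Definition indep (R : nzRingType) (m : nat) (r : 'I_m -> nat)
    (pi : 'rV[R]_((\prod_(j < m) ncat r j)%N)) : Prop :=
  forall i : 'I_((\prod_(j < m) ncat r j)%N),
    pi 0 i = \prod_(j < m)
      \sum_(i' < (\prod_(j < m) ncat r j)%N
              | digit (ncat r) j i' == digit (ncat r) j i) pi 0 i'.

From HB Require Import structures.
From mathcomp Require Import all_boot all_order all_algebra.
Import Order.TTheory GRing.Theory Num.Theory.
Local Open Scope ring_scope.
Set Implicit Arguments. Unset Strict Implicit. Unset Printing Implicit Defensive.

(* Under complete independence pi is the product of its one-dimensional
   marginals p_j, so X_a' D_pi, X_a' D_pi X_a and the G matrices are all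
   Kronecker products over the variables, and products of Kronecker products
   are computed factorwise (for the lexicographic cell order this is the
   identity  sum_i prod_j F_j(i_j) = prod_j sum_y F_j(y)).  Factorwise, P_a is
   the identity for j in a and the averaging matrix 1 p_j' for j not in a.
   Hence every factor of P_a G_{t,h}(j_h) either has a vanishing first row
   (j in a and in t or h, as j_h <> 0) or constant rows, which puts its columns
   in the span of G_{a cap (t cup h)}; and when t is in a and a misses h, the
   factors off t are the constants P(X_j = (j_h)_j) or 1, which gives (b). *)

Definition place m (n : 'I_m -> nat) (j : 'I_m) : nat := \prod_(l < m | (j < l)%N) n l.

Lemma digitE m (n : 'I_m -> nat) j i : digit n j i = ((i %/ place n j) %% n j)%N.
Proof. by []. Qed.

Lemma dvdn_place_prod m (n : 'I_m -> nat) j : (place n j * n j %| \prod_l n l)%N.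
Proof.
rewrite [X in (_ %| X)%N](bigID (fun l : 'I_m => (j < l)%N)) /=.
by rewrite [X in (_ %| _ * X)%N](bigD1 j) ?ltnn //= mulnA dvdn_mulr.
Qed.

Lemma digit_ord0 m (n : 'I_m.+1 -> nat) i :
  digit n ord0 i = ((i %/ \prod_(l < m) n (lift ord0 l)) %% n ord0)%N.
Proof. by rewrite digitE /place big_mkcond big_ord_recl /= mul1n. Qed.

Lemma place_lift m (n : 'I_m.+1 -> nat) j :
  place n (lift ord0 j) = place (fun l => n (lift ord0 l)) j.
Proof.
rewrite /place big_mkcond big_ord_recl /= mul1n [RHS]big_mkcond.
by apply: eq_bigr => l _; rewrite /bump /= !add1n ltnS.
Qed.

Lemma digit_lift m (n : 'I_m.+1 -> nat) j i :
  digit n (lift ord0 j) i =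
  digit (fun l => n (lift ord0 l)) j (i %% \prod_(l < m) n (lift ord0 l))%N.
Proof.
set n' := fun l => n (lift ord0 l).
rewrite !digitE place_lift -/n'.
have [Q0 | Qgt0] := posnP (place n' j); first by rewrite Q0 !divn0 !mod0n.
have /dvdnP [K ->] := dvdn_place_prod n' j.
set Q := place n' j; change (n (lift ord0 j)) with (n' j); set N := n' j.
have shift d s : ((d * (K * (Q * N)) + s) %/ Q %% N = s %/ Q %% N)%N.
  by rewrite (mulnC Q N) !mulnA divnMDl // modnMDl.
by rewrite {1}(divn_eq i (K * (Q * N))) shift.
Qed.

Lemma digit_lt m (n : 'I_m -> nat) j i : (i < \prod_l n l)%N -> (digit n j i < n j)%N.
Proof.
move=> lti; apply: ltn_pmod.
by move: (leq_ltn_trans (leq0n i) lti); rewrite (bigD1 j) //= muln_gt0 => /andP[].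
Qed.

Lemma digit_inj m (n : 'I_m -> nat) i k :
  (i < \prod_l n l)%N -> (k < \prod_l n l)%N ->
  (forall j, digit n j i = digit n j k) -> i = k.
Proof.
elim: m n i k => [|m IH] n i k; first by rewrite big_ord0 !ltnS !leqn0 => /eqP-> /eqP->.
rewrite big_ord_recl => lti ltk eq_ik.
set P := (\prod_(l < m) n (lift ord0 l))%N in lti ltk.
have P_gt0 : (0 < P)%N by move: (leq_ltn_trans (leq0n i) lti); rewrite muln_gt0 => /andP[].
have eq_mod : (i %% P = k %% P)%N.
  apply: (IH (fun l => n (lift ord0 l))); rewrite ?ltn_pmod // => j.
  by rewrite -!digit_lift.
have eq_div : (i %/ P = k %/ P)%N.
  have small x : (x < n ord0 * P)%N -> (x %/ P %% n ord0 = x %/ P)%N.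
    by move=> ltx; rewrite modn_small // ltn_divLR.
  by have := eq_ik ord0; rewrite !digit_ord0 -/P !small.
by rewrite (divn_eq i P) (divn_eq k P) eq_div eq_mod.
Qed.

Lemma sum_prod_digit (R : comPzSemiRingType) m (n : 'I_m -> nat) (F : 'I_m -> nat -> R) :
  \sum_(i < \prod_j n j) \prod_j F j (digit n j i) = \prod_j \sum_(y < n j) F j y.
Proof.
transitivity (\sum_(0 <= i < \prod_j n j) \prod_j F j (digit n j i)).
  by rewrite big_mkord.
elim: m n F => [|m IH] n F; first by rewrite !big_ord0 big_nat1 big_ord0.
rewrite big_ord_recl [RHS]big_ord_recl big_nat_mul.
rewrite -(IH (fun l => n (lift ord0 l)) (fun l => F (lift ord0 l))).
rewrite big_distrl big_mkord /=; apply: eq_bigr => q _; rewrite big_distrr /=.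
set P := (\prod_(l < m) n (lift ord0 l))%N.
rewrite -{1}[(q * P)%N]add0n big_addn mulSn addnK.
apply: eq_big_nat => s /andP[_ lts]; rewrite big_ord_recl addnC.
have P_gt0 : (0 < P)%N by apply: leq_ltn_trans lts.
rewrite digit_ord0 -/P divnMDl // divn_small // addn0 modn_small //.
by congr (_ * _); apply: eq_bigr => j _; rewrite digit_lift -/P modnMDl modn_small.
Qed.

Lemma exists_digit m (n : 'I_m -> nat) j y :
  (0 < \prod_l n l)%N -> (y < n j)%N -> exists2 i, (i < \prod_l n l)%N & digit n j i = y.
Proof.
move=> prod_gt0 lty; have /dvdnP [K prodE] := dvdn_place_prod n j.
have [K_gt0 place_gt0] : (0 < K)%N /\ (0 < place n j)%N.
  by move: prod_gt0; rewrite prodE !muln_gt0 => /and3P[].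
exists (y * place n j)%N; last by rewrite digitE mulnK // modn_small.
by rewrite prodE mulnCA [(y * _)%N]mulnC ltn_pmul2l // (leq_trans lty) // leq_pmull.
Qed.

Lemma prod_digit_eq (R : comPzSemiRingType) m (n : 'I_m -> nat) i k :
  (i < \prod_l n l)%N -> (k < \prod_l n l)%N ->
  \prod_j ((digit n j i == digit n j k)%:R : R) = (i == k)%:R.
Proof.
move=> lti ltk; have [<-|neq_ik] := eqVneq i k; first by apply: big1 => j _; rewrite eqxx.
have [j /negbTE neq_j] : exists j, digit n j i != digit n j k.
  apply/existsP; apply: contraR neq_ik => /existsPn eq_digits.
  by apply/eqP/(digit_inj lti ltk) => j; apply/eqP/negbNE.
by rewrite (bigD1 j) //= neq_j mul0r.
Qed.

Lemma sum_delta (R : pzSemiRingType) k x (g : nat -> R) :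
  (x < k)%N -> \sum_(y < k) (x == y :> nat)%:R * g y = g x.
Proof.
move=> ltx; rewrite (bigD1 (Ordinal ltx)) //= eqxx mul1r big1 ?addr0 // => y.
by rewrite eq_sym -val_eqE /= => /negbTE->; rewrite mul0r.
Qed.

Section Kronecker.

Variable m : nat.
Implicit Types (nr nk nc : 'I_m -> nat).

Lemma eq_kron (R : nzRingType) nr nc (A B : 'I_m -> nat -> nat -> R) :
  (forall j x z, (x < nr j)%N -> (z < nc j)%N -> A j x z = B j x z) ->
  kron nr nc A = kron nr nc B.
Proof.
move=> eqAB; apply/matrixP => i k; rewrite !mxE.
by apply: eq_bigr => j _; rewrite eqAB ?digit_lt.
Qed.

Lemma trmx_kron (R : nzRingType) nr nc (A : 'I_m -> nat -> nat -> R) :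
  (kron nr nc A)^T = kron nc nr (fun j x z => A j z x).
Proof. by apply/matrixP => i k; rewrite !mxE. Qed.

Lemma mul_kron (R : comNzRingType) nr nk nc (A B : 'I_m -> nat -> nat -> R) :
  kron nr nk A *m kron nk nc B =
  kron nr nc (fun j x z => \sum_(y < nk j) A j x y * B j y z).
Proof.
apply/matrixP => i k; rewrite !mxE.
rewrite -(sum_prod_digit nk (fun j y => A j (digit nr j i) y * B j y (digit nc j k))).
by apply: eq_bigr => c _; rewrite !mxE -big_split.
Qed.

Lemma scale_kron (R : comNzRingType) nr nc (c : 'I_m -> R) (A : 'I_m -> nat -> nat -> R) :
  (\prod_j c j) *: kron nr nc A = kron nr nc (fun j x z => c j * A j x z).
Proof. by apply/matrixP => i k; rewrite !mxE big_split. Qed.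

Lemma kron_mul_diag (R : comNzRingType) nr nc (A : 'I_m -> nat -> nat -> R)
    (d : 'I_m -> nat -> R) :
  kron nr nc A *m diag_mx (\row_k \prod_j d j (digit nc j k)) =
  kron nr nc (fun j x z => A j x z * d j z).
Proof. by apply/matrixP => i k; rewrite mul_mx_diag !mxE big_split. Qed.

Lemma kron_diag (R : comNzRingType) nr (d : 'I_m -> nat -> R) :
  kron nr nr (fun j x y => (x == y :> nat)%:R * d j x) =
  diag_mx (\row_i \prod_j d j (digit nr j i)).
Proof.
by apply/matrixP => i k; rewrite !mxE big_split /= prod_digit_eq // mulr_natl.
Qed.

Lemma kron_delta (R : comNzRingType) nr :
  kron nr nr (fun j x y => ((x == y :> nat)%:R : R)) = 1%:M.
Proof. by apply/matrixP => i k; rewrite !mxE prod_digit_eq. Qed.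

End Kronecker.

Lemma kron_Gmat (R : comNzRingType) m (r : 'I_m -> nat) (s : {set 'I_m}) nc
    (F : 'I_m -> nat -> nat -> R) :
  (forall j z, j \in s -> F j 0%N z = 0) ->
  (forall j x z, j \notin s -> (x < ncat r j)%N -> F j x z = F j 0%N z) ->
  kron (ncat r) nc F =
  Gmat R r s *m kron (Gcols r s) nc (fun j y z => if j \in s then F j y.+1 z else F j 0%N z).
Proof.
move=> F0 Fconst; rewrite /Gmat mul_kron; apply: eq_kron => j x z ltx _.
have [js|js] := boolP (j \in s).
  have -> : Gcols r s j = r j by rewrite /Gcols js.
  case: x ltx => [_|x ltx]; first by rewrite F0 // big1 // => y _; rewrite mul0r.
  by under eq_bigr do rewrite eqSS; rewrite (sum_delta (fun y => F j y.+1 z)).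
have -> : Gcols r s j = 1%N by rewrite /Gcols (negbTE js).
by rewrite big_ord1 mul1r Fconst.
Qed.

Section Marginals.

Variables (R : numFieldType) (m : nat) (r : 'I_m -> nat).
Variable pi : 'rV[R]_(\prod_(j < m) ncat r j).

Definition marginal (j : 'I_m) (y : nat) : R :=
  \sum_(i < \prod_(l < m) ncat r l | digit (ncat r) j i == y) pi 0 i.

Hypothesis pi_gt0 : forall i, 0 < pi 0 i.
Hypothesis pi_sum1 : \sum_i pi 0 i = 1.
Hypothesis pi_indep : indep pi.

Lemma indep_prodE i : pi 0 i = \prod_j marginal j (digit (ncat r) j i).
Proof. exact: pi_indep. Qed.

Lemma indep_rowE : pi = \row_i \prod_j marginal j (digit (ncat r) j i).
Proof. by apply/rowP => i; rewrite mxE indep_prodE. Qed.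

Lemma sum_marginal j : \sum_(y < ncat r j) marginal j y = 1.
Proof.
rewrite -pi_sum1 /marginal; under eq_bigr do rewrite big_mkcond /=.
rewrite exchange_big; apply: eq_bigr => i _ /=.
under eq_bigr do rewrite -mulrb -mulr_natl.
exact: (sum_delta (fun _ => pi 0 i) (digit_lt _ (ltn_ord i))).
Qed.

Lemma marginal_gt0 j y : (y < ncat r j)%N -> 0 < marginal j y.
Proof.
move=> lty; have [i lti digit_i] := exists_digit (prodn_gt0 (fun l => ltn0Sn (r l))) lty.
rewrite /marginal (bigD1 (Ordinal lti)) /= ?digit_i //.
by rewrite ltr_pwDl // sumr_ge0 // => k _; apply: ltW.
Qed.

Lemma Pmat_kron (a : {set 'I_m}) :
  Pmat pi a =
  kron (ncat r) (ncat r) (fun j x y => if j \in a then (x == y :> nat)%:R else marginal j y).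
Proof.
pose w j c := if j \in a then marginal j c else 1.
pose W := kron (Xcols r a) (Xcols r a) (fun j c c' => (c == c' :> nat)%:R * w j c).
pose Y := kron (Xcols r a) (ncat r)
  (fun j c x => if j \in a then (c == x :> nat)%:R else marginal j x).
set X := Xmat R r a.
(* X_a' D_pi = W Y with W diagonal and Y X_a = 1, so P_a = X_a W^-1 W Y = X_a Y. *)
have Xcols_in j : j \in a -> Xcols r a j = ncat r j by rewrite /Xcols => ->.
have Xcols_out j : j \notin a -> Xcols r a j = 1%N by rewrite /Xcols => /negbTE->.
have XtD : X^T *m diag_mx pi = W *m Y.
  rewrite [in LHS]indep_rowE trmx_kron kron_mul_diag mul_kron.
  apply: eq_kron => j c x ltc ltx; rewrite /w; case: (boolP (j \in a)) => ja.
    under eq_bigr do rewrite -mulrA.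
    rewrite (sum_delta (fun i => marginal j c * (i == x :> nat)%:R) ltc) eq_sym.
    by case: eqP => [->|_]; rewrite ?mulr1 ?mul1r ?mulr0 ?mul0r.
  move: ltc; rewrite Xcols_out // ltnS leqn0 => /eqP->.
  by rewrite big_ord1 !mul1r.
have YX : Y *m X = 1%:M.
  rewrite -kron_delta mul_kron; apply: eq_kron => j c c' ltc ltc'.
  case: (boolP (j \in a)) => ja.
    by rewrite Xcols_in // in ltc; rewrite (sum_delta (fun i => (i == c' :> nat)%:R) ltc).
  move: ltc ltc'; rewrite Xcols_out // !ltnS !leqn0 => /eqP-> /eqP->.
  by under eq_bigr do rewrite mulr1; rewrite sum_marginal.
have W_unit : W \in unitmx.
  rewrite /W kron_diag unitmxE det_diag unitfE; apply/lt0r_neq0/prodr_gt0 => c _.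
  rewrite mxE; apply: prodr_gt0 => j _; rewrite /w.
  case: (boolP (j \in a)) => ja //; apply: marginal_gt0.
  by rewrite -Xcols_in // digit_lt.
rewrite /Pmat /= -/X.
have -> : X^T *m diag_mx pi *m X = W by rewrite XtD -mulmxA YX mulmx1.
rewrite -mulmxA XtD mulmxA mulmxKV // mul_kron.
apply: eq_kron => j x y ltx lty; case: (boolP (j \in a)) => ja.
  by rewrite -Xcols_in // in ltx; rewrite (sum_delta (fun c => (c == y :> nat)%:R) ltx).
by rewrite Xcols_out // big_ord1 mul1r.
Qed.

Lemma Pmat_mul_kron (a : {set 'I_m}) nc (B : 'I_m -> nat -> nat -> R) :
  Pmat pi a *m kron (ncat r) nc B =
  kron (ncat r) nc
    (fun j x z => if j \in a then B j x z else \sum_(y < ncat r j) marginal j y * B j y z).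
Proof.
rewrite Pmat_kron mul_kron; apply: eq_kron => j x z ltx _.
by case: (j \in a) => //; rewrite (sum_delta (fun y => B j y z) ltx).
Qed.

Lemma prob_h_prod (h : {set 'I_m}) (jh : 'I_m -> nat) :
  (forall j, j \in h -> (jh j < ncat r j)%N) ->
  prob_h pi h jh = \prod_j (if j \in h then marginal j (jh j) else 1).
Proof.
move=> jh_lt; rewrite /prob_h big_mkcond /=.
pose F j y := (if j \in h then (jh j == y :> nat)%:R else 1) * marginal j y.
transitivity (\sum_(i < \prod_(j < m) ncat r j) \prod_j F j (digit (ncat r) j i)).
  apply: eq_bigr => i _; rewrite big_split /= -indep_prodE.
  case: (boolP [forall j in h, _]) => [/forall_inP digit_eq | /forall_inPn [j jh' neq]].
    rewrite [X in _ = X * _]big1 ?mul1r // => j _; case: (boolP (j \in h)) => // jh'.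
    by rewrite (eqP (digit_eq j jh')) eqxx.
  by rewrite (bigD1 j) //= jh' eq_sym (negbTE neq) !mul0r.
rewrite (sum_prod_digit (ncat r) F); apply: eq_bigr => j _; rewrite /F.
case: (boolP (j \in h)) => jh'; first exact: (sum_delta (marginal j) (jh_lt j jh')).
by under eq_bigr do rewrite mul1r; rewrite sum_marginal.
Qed.

End Marginals.

Theorem lemma7 (R : realFieldType) (m : nat) (r : 'I_m -> nat)
    (pi : 'rV[R]_((\prod_(j < m) ncat r j)%N))
    (t h a : {set 'I_m}) (jh : 'I_m -> nat) :
  (forall i, 0 < pi 0 i) ->
  \sum_i pi 0 i = 1 ->
  indep pi ->
  [disjoint t & h] ->
  (forall j, j \in h -> (0 < jh j <= r j)%N) ->
  ((Pmat pi a *m Gthmat R r t h jh)^T <= (Gmat R r (a :&: (t :|: h)))^T)%MS /\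
  (t \subset a -> [disjoint a & h] ->
     Pmat pi a *m Gthmat R r t h jh = prob_h pi h jh *: Gmat R r t).
Proof.
move=> pi_gt0 pi_sum1 pi_indep dis_th jh_range.
have jh_gt0 j : j \in h -> (0 < jh j)%N by case/jh_range/andP.
have jh_lt j : j \in h -> (jh j < ncat r j)%N by case/jh_range/andP.
rewrite /Gthmat Pmat_mul_kron //; split.
  rewrite (kron_Gmat (s := a :&: (t :|: h))) ?trmx_mul ?submxMl // => [j z | j x z].
    rewrite !inE => /andP[-> /orP[jt | jh']]; first by rewrite jt.
    by rewrite (disjointFl dis_th jh') jh' eq_sym (gtn_eqF (jh_gt0 j jh')).
  rewrite !inE negb_and negb_or => /orP[/negbTE-> // | /andP[/negbTE-> /negbTE->]].
  by case: (j \in a).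
move=> ta dah; rewrite prob_h_prod // /Gmat scale_kron.
apply: eq_kron => j x z _ _; case: (boolP (j \in a)) => ja.
  by rewrite (disjointFr dah ja) mul1r.
have /negbTE jt : j \notin t by apply: contra ja; apply: subsetP.
rewrite jt mulr1; case: (boolP (j \in h)) => jh'.
  by under eq_bigr do rewrite mulrC eq_sym; rewrite (sum_delta (marginal pi j) (jh_lt j jh')).
by under eq_bigr do rewrite mulr1; rewrite sum_marginal.
Qed.
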